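(* Let $n$ be a positive integer with $n\mid (q-1)$, and let $C$ be a cyclic code of length $n$ over $\mathbb{F}_q$ with complete defining set $Z\subseteq R_n$. Suppose $\ell$ is a divisor of $n$ such that $Z$ contains a coset $\beta G$ (with $\beta\in R_n$) of the subgroup $G$ of $R_n$ of order $\ell$, and $R_n\setminus Z$ contains a consecutive set of length $\frac{n}{\ell}-1$. Then the minimum distance of the dual code $C^{\perp}$ is exactly $\frac{n}{\ell}$.
   Context: Let $q$ be a prime power and $n\mid(q-1)$, so that the set $R_n$ of all $n$-th roots of unity is contained in $\mathbb{F}_q$ and is a cyclic group of order $n$; let $\alpha$ be a generator. For any $Z\subseteq R_n$, the cyclic code of length $n$ over $\mathbb{F}_q$ with complete defining set $Z$ is the ideal generated by $\prod_{\beta\in Z}(x-\beta)$ in $\mathbb{F}_q[x]/(x^n-1)$, identified with a subspace of $\mathbb{F}_q^n$ via coefficient vectors. A subset $\Omega\subseteq R_n$ is a consecutive set of length $\ell'$ if there exist a primitive $n$-th root of unity $\beta$ and an integer $i$ with $\Omega=\{\beta^i,\beta^{i+1},\dots,\beta^{i+\ell'-1}\}$. *)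

From HB Require Import structures.
From mathcomp Require Import all_boot all_order all_algebra.
Set Implicit Arguments. Unset Strict Implicit. Unset Printing Implicit Defensive.
Import Order.TTheory GRing.Theory.
Local Open Scope ring_scope.

Definition roots_unity (F : finFieldType) (n : nat) : {set F} :=
  [set x : F | x ^+ n == 1].

Definition vpoly (F : finFieldType) (n : nat) (c : 'rV[F]_n) : {poly F} :=
  \sum_(i < n) c ord0 i *: 'X^i.

Definition gen_poly (F : finFieldType) (Z : {set F}) : {poly F} :=
  \prod_(b in Z) ('X - b%:P).

(* The cyclic code of length n with complete defining set Z: the ideal
   generated by gen_poly Z in F[x]/(x^n - 1), identified with F^n through
   the canonical representatives of degree < n. *)
Definition cyclic_code (F : finFieldType) (n : nat) (Z : {set F})
  (c : 'rV[F]_n) : Prop :=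
  exists f : {poly F}, vpoly c = (gen_poly Z * f) %% ('X^n - 1).

Definition dual_code (F : finFieldType) (n : nat) (C : 'rV[F]_n -> Prop)
  (v : 'rV[F]_n) : Prop :=
  forall c, C c -> \sum_(i < n) c ord0 i * v ord0 i = 0.

Definition wt (F : finFieldType) (n : nat) (v : 'rV[F]_n) : nat :=
  #|[set i : 'I_n | v ord0 i != 0]|.

Definition min_dist_eq (F : finFieldType) (n : nat) (C : 'rV[F]_n -> Prop)
  (d : nat) : Prop :=
  (exists2 v, C v & (v != 0) && (wt v == d)) /\
  (forall v, C v -> v != 0 -> (d <= wt v)%N).

Definition consecutive_set (F : finFieldType) (n m : nat) (Om : {set F}) : Prop :=
  exists beta : F, exists i : int,
    n.-primitive_root beta /\
    Om = [set beta ^ (i + (j : nat)%:Z) | j : 'I_m].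

Definition is_subgroup_order (F : finFieldType) (n l : nat) (G : {set F}) : Prop :=
  [/\ G \subset roots_unity F n, 1 \in G,
      {in G &, forall x y, x * y \in G} & #|G| = l].

From HB Require Import structures.
From mathcomp Require Import all_boot all_order all_algebra.
From mathcomp Require Import zify.
Set Implicit Arguments. Unset Strict Implicit. Unset Printing Implicit Defensive.
Import Order.TTheory GRing.Theory.
Local Open Scope ring_scope.

(* Power sums over G are characters: sum_{g in G} g^k equals l
   when l | k and 0 otherwise.  Hence the vector v with v_k = beta^k for
   l | k (and 0 elsewhere) satisfies l * <c, v> = sum_{g in G} c(beta*g) = 0
   for every codeword c, because each beta*g is a root of c(x); since l is a
   unit in F (it divides q - 1), v lies in the dual, and it has weight n/l.

   For every w in R_n \ Z the geometric vector
   (w^(n-1-s))_s is a codeword, so a dual word v is orthogonal to it.  When w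
   runs through a consecutive set b^i, ..., b^(i+m-1) this makes the
   reweighted vector u_s = v_s b^(i(n-1-s)) satisfy m consecutive vanishing
   power sums with distinct nodes b^(n-1-s); the BCH argument (evaluate a
   polynomial of degree < m vanishing on all but one node of the support)
   forces the weight of v to exceed m. *)

Lemma horner_vpoly (F : finFieldType) n (c : 'rV[F]_n) x :
  (vpoly c).[x] = \sum_(i < n) c ord0 i * x ^+ i.
Proof.
rewrite /vpoly horner_sum; apply: eq_bigr => i _.
by rewrite hornerZ hornerXn.
Qed.

Lemma size_vpoly (F : finFieldType) n (c : 'rV[F]_n) : (size (vpoly c) <= n)%N.
Proof.
rewrite /vpoly; apply: (big_ind (fun p : {poly F} => size p <= n)%N).
- by rewrite size_poly0.
- by move=> p q Hp Hq; apply: leq_trans (size_polyD _ _) _; rewrite geq_max Hp Hq.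
- by move=> i _; apply: leq_trans (size_scale_leq _ _) _; rewrite size_polyXn.
Qed.

Lemma cyclic_code_root (F : finFieldType) n (Z : {set F}) (c : 'rV[F]_n) x :
  @cyclic_code F n Z c -> x \in Z -> x ^+ n = 1 ->
  \sum_(i < n) c ord0 i * x ^+ i = 0.
Proof.
move=> [f def_c] xZ xn; rewrite -horner_vpoly def_c.
have /(congr1 (horner^~ x)) := divp_eq (gen_poly Z * f) ('X^n - 1).
rewrite !hornerE xn subrr mulr0 add0r => <-.
by rewrite /gen_poly horner_prod (bigD1 x) //= hornerXsubC subrr !mul0r.
Qed.

(* For w in R_n outside Z, the vector (w^(n-1-s))_s is a codeword: its
   polynomial (w^n - x^n)/(w - x) vanishes on Z, so gen_poly Z divides it. *)
Lemma geometric_codeword (F : finFieldType) n (Z : {set F}) (w : F) :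
  (0 < n)%N -> Z \subset roots_unity F n -> w ^+ n = 1 -> w \notin Z ->
  @cyclic_code F n Z (\row_(s < n) w ^+ (n.-1 - s)).
Proof.
move=> n_gt0 ZR wn wZ; set c := \row_(s < n) _.
have gen_dvd : gen_poly Z %| vpoly c.
  rewrite /gen_poly -big_enum /=; apply: uniq_roots_dvdp; last first.
    by rewrite uniq_rootsE enum_uniq.
  apply/allP => z; rewrite mem_enum => zZ.
  have /eqP zn : z ^+ n == 1 by move: (subsetP ZR z zZ); rewrite inE.
  have wz : w - z != 0 by rewrite subr_eq0; apply: contraNneq wZ => ->.
  have := subrXX w z n; rewrite wn zn subrr => /esym /eqP.
  rewrite mulf_eq0 (negPf wz) /= => /eqP geom0.
  rewrite rootE horner_vpoly -[X in _ == X]geom0; apply/eqP.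
  by apply: eq_bigr => s _; rewrite mxE.
exists (vpoly c %/ gen_poly Z); rewrite mulrC divpK // modp_small //.
by rewrite -polyC1 size_XnsubC // ltnS size_vpoly.
Qed.

Lemma dual_orthogonal_nonroot (F : finFieldType) n (Z : {set F})
    (v : 'rV[F]_n) (w : F) :
  (0 < n)%N -> Z \subset roots_unity F n ->
  dual_code (@cyclic_code F n Z) v -> w \in roots_unity F n :\: Z ->
  \sum_(s < n) v ord0 s * w ^+ (n.-1 - s) = 0.
Proof.
move=> n_gt0 ZR vD; rewrite !inE => /andP[wZ /eqP wn].
rewrite -[RHS](vD _ (geometric_codeword n_gt0 ZR wn wZ)).
by apply: eq_bigr => s _; rewrite mxE mulrC.
Qed.

Lemma natr_card_finField (F : finFieldType) : (#|F|%:R : F) = 0.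
Proof.
have : \sum_(x : F) x = \sum_(x : F) (x + 1).
  exact: (reindex_inj (addIr (1 : F))).
rewrite big_split /= sumr_const => /eqP.
by rewrite -subr_eq0 opprD addrA subrr add0r oppr_eq0 => /eqP.
Qed.

(* Divisors of q - 1 are units in F_q, since (q - 1)%:R = -1. *)
Lemma natr_dvd_card_pred_neq0 (F : finFieldType) k :
  (k %| #|F|.-1)%N -> (k%:R : F) != 0.
Proof.
move=> /dvdnP[r def_q1]; apply/eqP => k0.
have q_gt0 : (0 < #|F|)%N by apply: ltn_trans (card_finNzRing_gt1 F).
have /eqP := natr_card_finField F.
rewrite -(prednK q_gt0) -addn1 natrD addr_eq0 def_q1 natrM k0 mulr0.
by rewrite eq_sym oppr_eq0 oner_eq0.
Qed.

Lemma roots_unity_neq0 (F : finFieldType) n x :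
  (0 < n)%N -> x \in roots_unity F n -> x != 0.
Proof.
move=> n_gt0; rewrite inE; apply: contraTneq => ->.
by rewrite expr0n gtn_eqF // eq_sym oner_eq0.
Qed.

Section SubgroupOfRoots.

Variables (F : finFieldType) (n : nat) (G : {set F}).
Hypotheses (n_gt0 : (0 < n)%N) (GR : G \subset roots_unity F n)
  (G1 : 1 \in G) (GM : {in G &, forall x y, x * y \in G}).

Lemma subgroup_neq0 x : x \in G -> x != 0.
Proof. by move=> /(subsetP GR); apply: roots_unity_neq0. Qed.

Lemma subgroup_translate x : x \in G -> [set x * g | g in G] = G.
Proof.
move=> xG; apply/eqP; rewrite eqEcard card_imset ?leqnn ?andbT.
  by apply/subsetP => y /imsetP [g gG ->]; exact: GM.
exact: mulfI (subgroup_neq0 xG).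
Qed.

Lemma big_subgroup_translate (R : Type) (idx : R) (op : Monoid.com_law idx)
    x (f : F -> R) :
  x \in G -> \big[op/idx]_(g in G) f (x * g) = \big[op/idx]_(g in G) f g.
Proof.
move=> xG; rewrite -big_imset ?subgroup_translate //.
by move=> a b _ _ /(mulfI (subgroup_neq0 xG)).
Qed.

(* Lagrange's theorem for G: x^#|G| = 1, by comparing prod_g (x g) with
   prod_g g. *)
Lemma subgroup_exp_card x : x \in G -> x ^+ #|G| = 1.
Proof.
move=> xG; have := big_subgroup_translate (GRing.mul : Monoid.com_law (1 : F)) id xG.
rewrite /= big_split /= prodr_const.
have P0 : \prod_(g in G) g != 0 by apply/prodf_neq0 => g; exact: subgroup_neq0.
by rewrite -{2}(mul1r (\prod_(g in G) g)) => /(mulIf P0).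
Qed.

(* An exponent killing all of G is a multiple of #|G|: otherwise the
   remainder r, 0 < r < #|G|, would give #|G| roots of X^r - 1. *)
Lemma subgroup_exp_dvd i : {in G, forall g, g ^+ i = 1} -> (#|G| %| i)%N.
Proof.
move=> Gi; set r := (i %% #|G|)%N.
have Gr : {in G, forall g, g ^+ r = 1}.
  move=> g gG; have := Gi g gG.
  by rewrite {1}(divn_eq i #|G|) exprD mulnC exprM subgroup_exp_card // expr1n mul1r.
have G_gt0 : (0 < #|G|)%N by apply/card_gt0P; exists 1.
rewrite /dvdn -/r; apply: contraT; rewrite -lt0n => r_gt0.
have : (size (enum G) < size ('X^r - 1 : {poly F})%R)%N.
  apply: max_poly_roots; last exact: enum_uniq.
  - by rewrite -size_poly_eq0 size_XnsubC.
  - by apply/allP => g; rewrite mem_enum => gG; rewrite rootE !hornerE Gr ?subrr.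
by rewrite size_XnsubC // -cardE ltnS leqNgt ltn_mod G_gt0.
Qed.

Lemma subgroup_power_sum i :
  \sum_(g in G) g ^+ i = if (#|G| %| i)%N then #|G|%:R else 0.
Proof.
case: ifP => [dvd_i | ndvd_i].
  rewrite (eq_bigr (fun _ => 1)) ?sumr_const // => g gG.
  by rewrite -(divnK dvd_i) mulnC exprM subgroup_exp_card // expr1n.
have [x xG xi] : exists2 x, x \in G & x ^+ i != 1.
  apply/exists_inP; apply: contraFT ndvd_i; rewrite negb_exists_in => /forall_inP Gi.
  by apply: subgroup_exp_dvd => g /Gi /negbNE /eqP.
have := big_subgroup_translate (GRing.add : Monoid.com_law (0 : F)) (fun y => y ^+ i) xG.
under eq_bigr do rewrite /= exprMn.
rewrite -mulr_sumr => /eqP; rewrite -subr_eq0 -{2}(mul1r (\sum_(g in G) _)).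
by rewrite -mulrBl mulf_eq0 subr_eq0 (negPf xi) => /eqP.
Qed.

End SubgroupOfRoots.

Lemma card_multiples_ord n l : (0 < n)%N -> (l %| n)%N ->
  #|[set i : 'I_n | (l %| i)%N]| = (n %/ l)%N.
Proof.
move=> n_gt0 ln; rewrite cardsE -sum1_card big_mkcond /=.
under eq_bigr => i _ do rewrite -topredE /= -[if _ then _ else _]/(nat_of_bool _).
rewrite -(big_mkord xpredT (fun i => nat_of_bool (l %| i)%N)) divn_count_dvd.
rewrite big_nat_recr //= ln; case: n n_gt0 {ln} => // n _.
by rewrite big_ltn // dvdn0 addnC.
Qed.

(* BCH bound in its general form: if the weighted power sums
   sum_s u_s a_s^j vanish for j < m, with pairwise distinct nodes a_s, then
   a nonzero u has more than m nonzero entries.  Otherwise the polynomial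
   vanishing at the nodes of the support except t has degree < m, and
   pairing u with its values isolates the nonzero term u_t P(a_t). *)
Lemma bch_bound (F : fieldType) n m (a u : 'I_n -> F) :
  injective a ->
  (forall j, (j < m)%N -> \sum_(s < n) u s * a s ^+ j = 0) ->
  forall t, u t != 0 -> (m < #|[set s | u s != 0%R]|)%N.
Proof.
move=> a_inj sum0 t ut; rewrite ltnNge; apply/negP => supp_le.
set S := [set s | u s != 0].
have tS : t \in S by rewrite inE.
pose P : {poly F} := \prod_(s <- enum (S :\ t)) ('X - (a s)%:P).
have sizeP : size P = #|S| by rewrite size_prod_XsubC -cardE (cardsD1 t S) tS.
have pairing0 : \sum_(s < n) u s * P.[a s] = 0.
  under eq_bigr do rewrite horner_coef mulr_sumr.
  rewrite exchange_big /= big1 // => j _.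
  under eq_bigr do rewrite mulrCA.
  by rewrite -mulr_sumr sum0 ?mulr0 // (leq_trans (ltn_ord j)) ?sizeP.
move: pairing0; rewrite (bigD1 t) //= big1 ?addr0.
  apply/eqP; rewrite mulf_eq0 negb_or ut /= /P horner_prod.
  rewrite prodf_seq_neq0; apply/allP => s; rewrite mem_enum => sSt /=.
  rewrite hornerXsubC subr_eq0; apply: contraTneq sSt => /a_inj ->.
  by rewrite !inE eqxx.
move=> s st; have [->|us] := eqVneq (u s) 0; first by rewrite mul0r.
rewrite /P horner_prod (big_rem s) /=; last by rewrite mem_enum !inE st us.
by rewrite hornerXsubC subrr mul0r mulr0.
Qed.

Lemma prim_root_rev_exp_inj (F : fieldType) n (b : F) :
  n.-primitive_root b -> injective (fun s : 'I_n => b ^+ (n.-1 - s)).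
Proof.
move=> pb s s' /eqP; rewrite (eq_prim_root_expr pb).
have lt_s := ltn_ord s; have lt_s' := ltn_ord s'.
rewrite !modn_small; try lia.
by move=> eq_rev; apply: val_inj => /=; lia.
Qed.

Definition coset_word (F : finFieldType) n l (beta : F) : 'rV[F]_n :=
  \row_(k < n) if (l %| k)%N then beta ^+ k else 0.

(* If Z contains the coset beta*G of the order-l subgroup G, the coset word
   is a dual codeword: l <c, v> = sum_{g in G} c(beta g) = 0, and l is a unit
   in F because it divides q - 1. *)
Lemma coset_word_dual (F : finFieldType) n l (Z G : {set F}) (beta : F) :
  (0 < n)%N -> (n %| #|F|.-1)%N -> (l %| n)%N -> is_subgroup_order n l G ->
  beta \in roots_unity F n -> [set beta * x | x in G] \subset Z ->
  dual_code (@cyclic_code F n Z) (coset_word n l beta).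
Proof.
move=> n_gt0 nq ln [GR G1 GM cardG] bR bZ c cC.
have l_unit : (l%:R : F) != 0 by apply/natr_dvd_card_pred_neq0/(dvdn_trans ln).
apply: (mulfI l_unit); rewrite mulr0 mulr_sumr.
transitivity (\sum_(k < n) \sum_(g in G) c ord0 k * (beta * g) ^+ k).
  apply: eq_bigr => k _; under eq_bigr do rewrite exprMn mulrA.
  rewrite -mulr_sumr (subgroup_power_sum n_gt0 GR G1 GM) cardG mxE.
  by case: ifP => _; rewrite ?mulr0 // mulrC.
rewrite exchange_big /= big1 // => g gG.
apply: cyclic_code_root cC _ _; first by apply/(subsetP bZ)/imset_f.
move: bR (subsetP GR g gG); rewrite !inE => /eqP bn /eqP gn.
by rewrite exprMn bn gn mulr1.
Qed.

Lemma wt_coset_word (F : finFieldType) n l (beta : F) :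
  (0 < n)%N -> (l %| n)%N -> beta != 0 -> wt (coset_word n l beta) = (n %/ l)%N.
Proof.
move=> n_gt0 ln b0; rewrite /wt -(card_multiples_ord n_gt0 ln).
apply: eq_card => k; rewrite !inE mxE.
by case: ifP => _; rewrite ?eqxx // expf_neq0.
Qed.

(* The coset word is nonzero: its entry at index 0 is 1. *)
Lemma coset_word_neq0 (F : finFieldType) n l (beta : F) :
  (0 < n)%N -> coset_word n l beta != 0.
Proof.
move=> n_gt0; apply/eqP => /matrixP /(_ ord0 (Ordinal n_gt0)).
by rewrite !mxE /= dvdn0 expr0 => /eqP; rewrite oner_eq0.
Qed.

Lemma dual_wt_consecutive (F : finFieldType) n m (Z Om : {set F})
    (v : 'rV[F]_n) :
  (0 < n)%N -> Z \subset roots_unity F n ->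
  Om \subset roots_unity F n :\: Z -> consecutive_set n m Om ->
  dual_code (@cyclic_code F n Z) v -> v != 0 -> (m < wt v)%N.
Proof.
move=> n_gt0 ZR OmS [b [i [pb def_Om]]] vD v_neq0.
have [t vt] : exists t, v ord0 t != 0.
  apply/existsP; apply: contraNT v_neq0; rewrite negb_exists => /forallP v0.
  by apply/eqP/matrixP => x y; rewrite ord1 mxE; apply/eqP/negbNE/v0.
have b0 : b != 0 by rewrite (prim_root_eq0 pb) -lt0n.
have B0 : b ^ i != 0 by rewrite expfz_neq0.
pose u (s : 'I_n) := v ord0 s * (b ^ i) ^+ (n.-1 - s).
have -> : wt v = #|[set s | u s != 0]|.
  by apply: eq_card => s; rewrite !inE mulf_eq0 negb_or expf_neq0 // andbT.
apply: (bch_bound (prim_root_rev_exp_inj pb)) (t) _; last first.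
  by rewrite mulf_neq0 // expf_neq0.
move=> j lt_jm; set w := b ^ (i + (j : nat)%:Z).
have wOm : w \in Om by rewrite def_Om; apply/imsetP; exists (Ordinal lt_jm).
rewrite -[RHS](dual_orthogonal_nonroot n_gt0 ZR vD (subsetP OmS w wOm)).
apply: eq_bigr => s _; rewrite /w exprzDr ?unitfE // exprMn /u.
by rewrite -!exprM mulnC -mulrA.
Qed.

Theorem proposition2p8 (F : finFieldType) (n : nat) (Z : {set F}) (l : nat)
  (G : {set F}) (beta : F) :
  (0 < n)%N -> (n %| #|F|.-1)%N ->
  Z \subset roots_unity F n ->
  (l %| n)%N ->
  is_subgroup_order n l G ->
  beta \in roots_unity F n ->
  [set beta * x | x in G] \subset Z ->
  (exists Om : {set F}, Om \subset roots_unity F n :\: Z /\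
     consecutive_set n (n %/ l).-1 Om) ->
  min_dist_eq (dual_code (@cyclic_code F n Z)) (n %/ l).
Proof.
move=> n_gt0 nq ZR ln Gl bR bZ [Om [OmS consOm]].
have l_gt0 : (0 < l)%N := dvdn_gt0 n_gt0 ln.
have d_gt0 : (0 < n %/ l)%N by rewrite divn_gt0 // dvdn_leq.
have beta_neq0 : beta != 0 := roots_unity_neq0 n_gt0 bR.
split.
  exists (coset_word n l beta); first exact: coset_word_dual Gl bR bZ.
  by rewrite coset_word_neq0 // wt_coset_word // eqxx.
move=> v vD v_neq0; rewrite -(prednK d_gt0).
exact: dual_wt_consecutive ZR OmS consOm vD v_neq0.
Qed.
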